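(* Let $A \in \mathbb{Z}^{(n-2)\times n}$ be an integer matrix of rank $n-2$ with $\ker_{\mathbb{Z}} A \cap \mathbb{N}^n = \{0\}$, and let $B$ be a Gale transform of $A$ whose rows $b_1,\dots,b_n$ are all nonzero. If the toric ideal $I_A$ is strongly robust, then $A$ has at least two mixed bouquets.
   Context: For $A \in \mathbb{Z}^{d\times n}$ of rank $d$, the toric ideal is $I_A = \langle p^u - p^v : u,v\in\mathbb{N}^n,\ Au = Av\rangle \subseteq \mathbb{K}[p_1,\dots,p_n]$. For $u \in \mathbb{N}^n$, $\mathcal{F}(u)=\{v\in\mathbb{N}^n : Av = Au\}$. A binomial $p^u - p^v$ is indispensable if $\mathcal{F}(u)=\{u,v\}$ and $\mathrm{supp}(u)\cap\mathrm{supp}(v)=\emptyset$; the set of these is $\mathcal{S}(A)$. A binomial $p^u-p^v\in I_A$ is primitive if there is no other binomial $p^{u'}-p^{v'}\in I_A$ with $p^{u'}\mid p^u$ and $p^{v'}\mid p^v$; the Graver basis $\mathcal{G}r(A)$ is the set of primitive binomials. $I_A$ is strongly robust if $\mathcal{S}(A)=\mathcal{G}r(A)$. A Gale transform of $A$ is an $n\times (n-d)$ integer matrix $B$ whose columns form a basis of $\ker_{\mathbb{Z}}A$, with rows $b_1,\dots,b_n$. A bouquet is a maximal subset $S\subseteq[n]$ such that $\mathrm{span}(b_s : s\in S)$ is one-dimensional. A bouquet $S$ is mixed if its vectors do not all point in the same direction, i.e. there exist $s,t\in S$ with $b_s = \lambda b_t$ for some $\lambda<0$. *)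

From HB Require Import structures.
From mathcomp Require Import all_boot all_order all_algebra.
Set Implicit Arguments. Unset Strict Implicit. Unset Printing Implicit Defensive.
Import Order.TTheory GRing.Theory Num.Theory.
Local Open Scope ring_scope.

Definition nvec (n : nat) (u : 'cV[int]_n) : bool := [forall i, 0 <= u i 0].

Definition supp (n : nat) (u : 'cV[int]_n) : {set 'I_n} := [set i | u i 0 != 0].

(* componentwise order, i.e. p^u' divides p^u *)
Definition le_vec (n : nat) (u' u : 'cV[int]_n) : bool := [forall i, u' i 0 <= u i 0].

(* The binomial p^u - p^v (u <> v, u v in N^n) is indispensable:
   F(u) = {u, v} and supp u, supp v disjoint. *)
Definition indispensable (d n : nat) (A : 'M[int]_(d, n)) (u v : 'cV[int]_n) : Prop :=
  [/\ nvec u /\ nvec v, u != v,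
      A *m v = A *m u,
      (forall w : 'cV[int]_n, nvec w -> A *m w = A *m u -> w = u \/ w = v)
    & [disjoint supp u & supp v]].

Definition primitive (d n : nat) (A : 'M[int]_(d, n)) (u v : 'cV[int]_n) : Prop :=
  [/\ nvec u, nvec v, u != v, A *m u = A *m v
    & forall u' v' : 'cV[int]_n, nvec u' -> nvec v' -> u' != v' ->
        A *m u' = A *m v' -> le_vec u' u -> le_vec v' v -> u' = u /\ v' = v].

(* S(A) = Gr(A) *)
Definition strongly_robust (d n : nat) (A : 'M[int]_(d, n)) : Prop :=
  forall u v : 'cV[int]_n, indispensable A u v <-> primitive A u v.

(* B is a Gale transform of A: its columns form a Z-basis of ker_Z A. *)
Definition gale_transform (d n m : nat) (A : 'M[int]_(d, n)) (B : 'M[int]_(n, m)) : Prop :=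
  [/\ A *m B = 0,
      (forall x : 'cV[int]_n, A *m x = 0 -> exists y : 'cV[int]_m, x = B *m y)
    & (forall y : 'cV[int]_m, B *m y = 0 -> y = 0)].

Definition ratmx (m n : nat) (M : 'M[int]_(m, n)) : 'M[rat]_(m, n) :=
  map_mx (intr : int -> rat) M.

(* dimension (over Q) of the span of the rows b_s, s in S *)
Definition span_dim (n m : nat) (B : 'M[int]_(n, m)) (S : {set 'I_n}) : nat :=
  \rank (\matrix_(i < n, j < m) (if i \in S then ratmx B i j else 0)).

Definition bouquet (n m : nat) (B : 'M[int]_(n, m)) (S : {set 'I_n}) : Prop :=
  span_dim B S = 1%N /\
  forall T : {set 'I_n}, S \proper T -> span_dim B T <> 1%N.

Definition mixed (n m : nat) (B : 'M[int]_(n, m)) (S : {set 'I_n}) : Prop :=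
  exists s t : 'I_n, [/\ s \in S, t \in S &
    exists lam : rat, lam < 0 /\ row s (ratmx B) = lam *: row t (ratmx B)].

From HB Require Import structures.
From mathcomp Require Import all_boot all_order all_algebra.
From mathcomp Require Import zify ring lra.
Set Implicit Arguments. Unset Strict Implicit. Unset Printing Implicit Defensive.
Import Order.TTheory GRing.Theory Num.Theory.
Local Open Scope ring_scope.

(* Factor each row of the Gale transform as b_k = g_k r_k with g_k > 0 and r_k
   primitive.  If some functional l and index i had l(r_j) < -l(r_i) for all j,
   a floor-division shift would give t with cross(r_i, t) = 1 and
   cross(t, b_k) <= max(cross(r_i, b_k), 0) for all k.  For the circuit
   x = (cross(r_i, b_k))_k of ker A, the vector x^+ - (cross(t, b_k))_k is then a
   third point in the fiber of the primitive binomial p^(x^+) - p^(x^-),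
   contradicting strong robustness.  Hence the convex hull of the r_k is centrally
   symmetric, so every exposed vertex r_i has an antipode r_j = -r_i.  Since the
   r_k span the plane there are two non-parallel exposed vertices, and their
   parallel classes are two distinct mixed bouquets. *)

(** * Integer vectors in the plane *)

Definition dot (x y : 'rV[int]_2) : int := x 0 0 * y 0 0 + x 0 1 * y 0 1.
Definition cross (x y : 'rV[int]_2) : int := x 0 0 * y 0 1 - x 0 1 * y 0 0.
Definition perp (x : 'rV[int]_2) : 'rV[int]_2 :=
  \row_j (if j == 0 then - x 0 1 else x 0 0).

Lemma ord2P (j : 'I_2) : j = 0 \/ j = 1.
Proof. by case: j => [[|[|m]] ltm2]; [left|right|] => //; exact/eqP. Qed.

Lemma row2P (x y : 'rV[int]_2) : x 0 0 = y 0 0 -> x 0 1 = y 0 1 -> x = y.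
Proof. by move=> eq0 eq1; apply/rowP => j; case: (ord2P j) => ->. Qed.

Lemma dotC x y : dot x y = dot y x.
Proof. by rewrite /dot; ring. Qed.

Lemma dotDl l m x : dot (l + m) x = dot l x + dot m x.
Proof. by rewrite /dot !mxE; ring. Qed.

Lemma dotZl a l x : dot (a *: l) x = a * dot l x.
Proof. by rewrite /dot !mxE; ring. Qed.

Lemma dotNl l x : dot (- l) x = - dot l x.
Proof. by rewrite /dot !mxE; ring. Qed.

Lemma dotNr l x : dot l (- x) = - dot l x.
Proof. by rewrite /dot !mxE; ring. Qed.

Lemma dotZr a l x : dot l (a *: x) = a * dot l x.
Proof. by rewrite /dot !mxE; ring. Qed.

Lemma crossZr a z x : cross z (a *: x) = a * cross z x.
Proof. by rewrite /cross !mxE; ring. Qed.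

Lemma crossZl a z x : cross (a *: z) x = a * cross z x.
Proof. by rewrite /cross !mxE; ring. Qed.

Lemma dot_perpl z x : dot (perp z) x = cross z x.
Proof. by rewrite /dot /cross !mxE /=; ring. Qed.

Lemma crossxx z : cross z z = 0.
Proof. by rewrite /cross mulrC subrr. Qed.

Lemma dot_self_eq0 z : (dot z z == 0) = (z == 0).
Proof.
rewrite /dot -!expr2 paddr_eq0 ?sqr_ge0 // !sqrf_eq0.
apply/andP/eqP => [[/eqP z0 /eqP z1] | ->]; last by rewrite !mxE.
by apply: row2P; rewrite mxE.
Qed.

Lemma cross_perpl z : cross (perp z) z = - dot z z.
Proof. by rewrite /cross /dot !mxE /=; ring. Qed.

Lemma cross_perpl_neq0 z : z != 0 -> cross (perp z) z != 0.
Proof. by rewrite cross_perpl oppr_eq0 dot_self_eq0. Qed.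

Lemma perp_eq0 z : (perp z == 0) = (z == 0).
Proof.
apply/idP/idP => [/eqP pz0 | /eqP ->]; last by apply/eqP/row2P; rewrite !mxE /= ?oppr0.
by rewrite -dot_self_eq0 -oppr_eq0 -cross_perpl pz0 /cross !mxE !mul0r subrr.
Qed.

Lemma cross_perpr z w : cross z (perp w) = dot z w.
Proof. by rewrite /cross /dot !mxE /=; ring. Qed.

Lemma dot_eq0_perp z s y : cross z s = 1 -> dot z y = 0 -> y = dot s y *: perp z.
Proof.
move=> zs zy; apply: row2P; apply/eqP; rewrite !mxE /= -subr_eq0.
  have -> : y 0 0 - dot s y * - z 0 1 = y 0 0 * (1 - cross z s) + s 0 1 * dot z y.
    by rewrite /cross /dot; ring.
  by rewrite zs zy subrr !mulr0 addr0.
have -> : y 0 1 - dot s y * z 0 0 = y 0 1 * (1 - cross z s) - s 0 0 * dot z y.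
  by rewrite /cross /dot; ring.
by rewrite zs zy subrr !mulr0 subr0.
Qed.

Lemma cross_dot_inj l m x y :
  cross l m != 0 -> dot l x = dot l y -> dot m x = dot m y -> x = y.
Proof.
move=> /mulfI lm_inj eql eqm; apply: row2P; apply: lm_inj.
- have -> : cross l m * x 0 0 = m 0 1 * dot l x - l 0 1 * dot m x.
    by rewrite /cross /dot; ring.
  by rewrite eql eqm /cross /dot; ring.
- have -> : cross l m * x 0 1 = l 0 0 * dot m x - m 0 0 * dot l x.
    by rewrite /cross /dot; ring.
  by rewrite eql eqm /cross /dot; ring.
Qed.

Lemma dot_inj x y : (forall m, dot m x = dot m y) -> x = y.
Proof.
move=> eqxy; apply: (@cross_dot_inj (delta_mx 0 0) (delta_mx 0 1)) => //.
by rewrite /cross !mxE.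
Qed.

Lemma cross_eq0_dot z y : cross z y = 0 -> dot z z *: y = dot z y *: z.
Proof.
move=> zy; apply: row2P; rewrite !mxE; apply/eqP; rewrite -subr_eq0.
  have -> : dot z z * y 0 0 - dot z y * z 0 0 = - z 0 1 * cross z y.
    by rewrite /cross /dot; ring.
  by rewrite zy mulr0.
have -> : dot z z * y 0 1 - dot z y * z 0 1 = z 0 0 * cross z y.
  by rewrite /cross /dot; ring.
by rewrite zy mulr0.
Qed.

Definition content (b : 'rV[int]_2) : int := gcdz (b 0 0) (b 0 1).

Definition direction (b : 'rV[int]_2) : 'rV[int]_2 := \row_j divz (b 0 j) (content b).

Lemma contentK b : content b *: direction b = b.
Proof.
apply/rowP => j; rewrite !mxE mulrC divzK //.
by case: (ord2P j) => ->; [apply: dvdz_gcdl | apply: dvdz_gcdr].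
Qed.

Lemma content_gt0 b : b != 0 -> 0 < content b.
Proof.
move=> b_neq0; rewrite lt_def /content gcdz_eq0 andbT.
by apply: contra b_neq0 => /andP [/eqP b0 /eqP b1]; apply/eqP/row2P; rewrite mxE.
Qed.

Lemma direction_unimodular b : b != 0 -> exists s, cross (direction b) s = 1.
Proof.
move=> /content_gt0 /lt0r_neq0 /mulfI content_inj.
have [u [v uv]] := Bezoutz (b 0 0) (b 0 1).
exists (perp (\row_j (if j == 0 then u else v))); apply: content_inj.
rewrite mulr1 cross_perpr -dotZl contentK [RHS]/content -uv /dot !mxE /=.
by ring.
Qed.

(** * Centrally balanced configurations *)

Lemma norm_le_sum_norm n (f : 'I_n -> int) q : `|f q| <= \sum_p `|f p|.
Proof. by rewrite (bigD1 q) //= lerDl sumr_ge0. Qed.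

(* Equivalently, the convex hull of the [r i] is centrally symmetric. *)
Definition balanced n (r : 'I_n -> 'rV[int]_2) : Prop :=
  forall l i, exists j, - dot l (r i) <= dot l (r j).

Definition exposed n (r : 'I_n -> 'rV[int]_2) (l : 'rV[int]_2) (i : 'I_n) : Prop :=
  forall j, r j = r i \/ dot l (r j) < dot l (r i).

(* Large enough for [lex_weight r m *: l + m] to order the [r j] by [dot l],
   breaking ties by [dot m]. *)
Definition lex_weight n (r : 'I_n -> 'rV[int]_2) (m : 'rV[int]_2) : int :=
  1 + 2 * \sum_(p < n) `|dot m (r p)|.

Lemma lex_weight_ltr n (r : 'I_n -> 'rV[int]_2) l m j k :
  dot l (r j) < dot l (r k) ->
  dot (lex_weight r m *: l + m) (r j) < dot (lex_weight r m *: l + m) (r k).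
Proof.
have /= := norm_le_sum_norm (fun p => dot m (r p)) j.
have /= := norm_le_sum_norm (fun p => dot m (r p)) k.
rewrite !dotDl !dotZl /lex_weight.
by move: (\sum_(p < n) _) (dot m (r j)) (dot m (r k)) (dot l (r j)) (dot l (r k)) => ? ? ? ? ?;
  nia.
Qed.

Lemma exposed_lex_max n (i0 : 'I_n) (r : 'I_n -> 'rV[int]_2) (l m : 'rV[int]_2) :
  cross l m != 0 ->
  exists l' i, exposed r l' i /\ forall j, dot l (r j) <= dot l (r i).
Proof.
move=> lm_neq0; pose l' := lex_weight r m *: l + m.
have [i _ i_max'] := @arg_maxP _ _ _ i0 predT (fun q => dot l' (r q)) isT.
have i_max j : dot l' (r j) <= dot l' (r i) := i_max' j isT.
have l_max j : dot l (r j) <= dot l (r i).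
  by rewrite leNgt; apply/negP => /(lex_weight_ltr m); rewrite ltNge i_max.
exists l', i; split=> // j.
case: (ltrgtP (dot l (r j)) (dot l (r i))) => [lt_l | gt_l | eq_l].
- by right; apply: lex_weight_ltr.
- by have := l_max j; rewrite leNgt gt_l.
have [eq_l' | neq_l'] := eqVneq (dot l' (r j)) (dot l' (r i)).
  left; apply: (cross_dot_inj lm_neq0 eq_l).
  by move: eq_l'; rewrite !dotDl !dotZl eq_l => /addrI.
by right; rewrite lt_neqAle neq_l' i_max.
Qed.

Section Balanced.

Variables (n : nat) (r : 'I_n -> 'rV[int]_2).
Hypothesis r_balanced : balanced r.

Lemma balanced_min_opposite l i :
  (forall j, dot l (r j) <= dot l (r i)) -> exists j, dot l (r j) = - dot l (r i).
Proof.
move=> i_max; have [j] := r_balanced (- l) i; have [k] := r_balanced l j.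
rewrite !dotNl opprK => jk ij; exists j.
have := i_max k; lia.
Qed.

Lemma exposed_opposite_le l i j m :
  exposed r l i -> dot l (r j) = - dot l (r i) -> - dot m (r i) <= dot m (r j).
Proof.
move=> i_exp j_min; pose l' := lex_weight r m *: l + m.
have [k] := r_balanced l' j.
have : dot l' (r k) <= dot l' (r i).
  by case: (i_exp k) => [-> // | /(lex_weight_ltr m) /ltW].
by rewrite !dotDl !dotZl j_min mulrN; lia.
Qed.

Lemma exposed_antipode l i : exposed r l i -> exists j, r j = - r i.
Proof.
move=> i_exp.
have i_max j : dot l (r j) <= dot l (r i).
  by case: (i_exp j) => [-> // | /ltW].
have [j j_min] := balanced_min_opposite i_max.
exists j; apply: dot_inj => m.
have := exposed_opposite_le m i_exp j_min.
have := exposed_opposite_le (- m) i_exp j_min.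
rewrite dotNr !dotNl; lia.
Qed.

Lemma balanced_two_antipodal_pairs :
  (forall k, r k != 0) -> (forall y, y != 0 -> exists k, dot y (r k) != 0) ->
  exists i1 i2 j1 j2, [/\ cross (r i1) (r i2) != 0, r j1 = - r i1 & r j2 = - r i2].
Proof.
move=> r_neq0 r_span.
have [i0 _] : exists i0, dot (const_mx 1) (r i0) != 0.
  by apply: r_span; apply/eqP => /matrixP /(_ 0 0); rewrite !mxE.
have exposed_beyond z : z != 0 -> exists l i, exposed r l i /\ 0 < cross z (r i).
  move=> z_neq0.
  have [p p_pos] : exists p, 0 < cross z (r p).
    have perp_neq0 : perp z != 0 by rewrite perp_eq0.
    have [q] := r_span _ perp_neq0.
    rewrite dot_perpl; case: ltrgtP => // [q_neg _ | q_pos _]; last by exists q.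
    have [j] := r_balanced (perp z) q; rewrite !dot_perpl => qj.
    by exists j; lia.
  have [l [i [i_exp i_max]]] := exposed_lex_max i0 r (cross_perpl_neq0 z_neq0).
  exists l, i; split=> //; apply: lt_le_trans p_pos _.
  by rewrite -!dot_perpl.
have [? [i1 [i1_exp _]]] := exposed_beyond _ (r_neq0 i0).
have [? [i2 [i2_exp i12_pos]]] := exposed_beyond _ (r_neq0 i1).
have [j1 j1_opp] := exposed_antipode i1_exp.
have [j2 j2_opp] := exposed_antipode i2_exp.
by exists i1, i2, j1, j2; rewrite gt_eqF.
Qed.

End Balanced.

Lemma floor_shift_le (K L a c : int) :
  0 < K -> - a * K + c * L < K -> - a + ((L %/ K)%Z + 1) * c <= Num.max c 0.
Proof.
move=> K_gt0 sep.
have lo := lez_floor L (lt0r_neq0 K_gt0); have hi := ltz_ceil L K_gt0.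
move: (L %/ K)%Z lo hi => q lo hi.
by case: (lerP c 0) => c_sign; nia.
Qed.

Lemma separation_shift n (r : 'I_n -> 'rV[int]_2) (l s : 'rV[int]_2) (i : 'I_n) :
  (forall j, dot l (r j) < - dot l (r i)) -> cross (r i) s = 1 ->
  exists t, cross (r i) t = 1 /\
    forall k, cross t (r k) <= Num.max (cross (r i) (r k)) 0.
Proof.
move=> sep unimod.
have K_gt0 : 0 < - dot l (r i) by have := sep i; lia.
pose t := s + ((dot l s %/ - dot l (r i))%Z + 1) *: r i.
exists t; split.
  by rewrite -unimod /t /cross !mxE; ring.
move=> k.
(* [r k] decomposes as [cross (r k) s *: r i + cross (r i) (r k) *: s]. *)
have decomp : dot l (r k) = - cross (r k) s * - dot l (r i) + cross (r i) (r k) * dot l s.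
  by rewrite -[dot l (r k)]mulr1 -unimod /cross /dot; ring.
have sep_k := sep k; rewrite decomp in sep_k.
suff -> : cross t (r k) =
    - cross (r k) s + ((dot l s %/ - dot l (r i))%Z + 1) * cross (r i) (r k).
  exact: floor_shift_le.
by rewrite /t /cross !mxE; ring.
Qed.

(** * Circuits of a rank-two Gale transform *)

Definition pos_part n (x : 'cV[int]_n) : 'cV[int]_n := \col_k Num.max (x k 0) 0.
Definition neg_part n (x : 'cV[int]_n) : 'cV[int]_n := pos_part (- x).

Lemma pos_partE n (x : 'cV[int]_n) k : pos_part x k 0 = Num.max (x k 0) 0.
Proof. by rewrite mxE. Qed.

Lemma neg_partE n (x : 'cV[int]_n) k : neg_part x k 0 = Num.max (- x k 0) 0.
Proof. by rewrite !mxE. Qed.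

Lemma pos_sub_neg n (x : 'cV[int]_n) : pos_part x - neg_part x = x.
Proof. by apply/colP => k; rewrite !mxE; move: (x k 0) => a; lia. Qed.

Lemma nvec_pos_part n (x : 'cV[int]_n) : nvec (pos_part x).
Proof. by apply/forallP => k; rewrite pos_partE; lia. Qed.

Lemma conformal_multiple n (x u v : 'cV[int]_n) (c : int) :
  x != 0 -> nvec u -> nvec v -> le_vec u (pos_part x) -> le_vec v (neg_part x) ->
  u - v = c *: x -> u = v \/ (u = pos_part x /\ v = neg_part x).
Proof.
move=> /matrix0Pn [p [j x_pj]] /forallP u_ge0 /forallP v_ge0 /forallP u_le /forallP v_le.
move=> /matrixP uvE.
have entry k : [/\ 0 <= u k 0, 0 <= v k 0, u k 0 <= Num.max (x k 0) 0,
    v k 0 <= Num.max (- x k 0) 0 & u k 0 - v k 0 = c * x k 0].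
  by have := u_le k; have := v_le k; have := uvE k 0;
    rewrite neg_partE pos_partE !mxE; split; rewrite ?u_ge0 ?v_ge0.
have x_p : x p 0 != 0 by rewrite (ord1 j) in x_pj.
have c01 : c = 0 \/ c = 1.
  by case: (entry p); move: x_p; move: (x p 0) (u p 0) (v p 0) => a b e; nia.
by case: c01 => c_val; [left | right; split]; apply/colP => k;
  rewrite ?neg_partE ?pos_partE ?mxE; case: (entry k); rewrite c_val;
  move: (x k 0) (u k 0) (v k 0) => a b e; lia.
Qed.

Lemma mulmx_trE n (B : 'M[int]_(n, 2)) (y : 'rV[int]_2) k :
  (B *m y^T) k 0 = dot (row k B) y.
Proof.
rewrite mxE big_ord_recl big_ord1 /dot !mxE.
by have -> : lift ord0 ord0 = 1 :> 'I_2 by apply/eqP.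
Qed.

Section GaleRankTwo.

Variables (d n : nat) (A : 'M[int]_(d, n)) (B : 'M[int]_(n, 2)).
Hypothesis B_gale : gale_transform A B.

Lemma gale_kerP (x : 'cV[int]_n) : A *m x = 0 -> exists y, x = B *m y^T.
Proof. by case: B_gale => _ B_ker _ /B_ker [y ->]; exists y^T; rewrite trmxK. Qed.

Lemma gale_ker (y : 'cV[int]_2) : A *m (B *m y) = 0.
Proof. by case: B_gale => AB0 _ _; rewrite mulmxA AB0 mul0mx. Qed.

Lemma gale_mul_inj (y : 'rV[int]_2) : B *m y^T = 0 -> y = 0.
Proof. by case: B_gale => _ _ B_inj /B_inj /(congr1 trmx); rewrite trmxK trmx0. Qed.

Lemma gale_rows_span y : y != 0 -> exists k, dot y (row k B) != 0.
Proof.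
move=> y_neq0; have : B *m y^T != 0 by apply: contra_neq y_neq0; apply: gale_mul_inj.
by case/matrix0Pn => k [j]; rewrite (ord1 j) mulmx_trE dotC; exists k.
Qed.

Variables (g : 'I_n -> int) (r : 'I_n -> 'rV[int]_2).
Hypothesis g_gt0 : forall k, 0 < g k.
Hypothesis rowBE : forall k, row k B = g k *: r k.

Section Circuit.

Variables (i : 'I_n) (s : 'rV[int]_2).
Hypothesis ri_unimodular : cross (r i) s = 1.

Let x := B *m (perp (r i))^T.

Lemma circuitE k : x k 0 = g k * cross (r i) (r k).
Proof. by rewrite mulmx_trE rowBE dotZl dotC dot_perpl. Qed.

Lemma circuit_neq0 : x != 0.
Proof.
apply/eqP => /gale_mul_inj /eqP; rewrite perp_eq0 => /eqP ri0.
by move: ri_unimodular; rewrite ri0 /cross !mxE !mul0r subrr.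
Qed.

Lemma circuit_ker_multiple w : A *m w = 0 -> w i 0 = 0 -> exists c, w = c *: x.
Proof.
move=> /gale_kerP [y ->]; rewrite mulmx_trE rowBE dotZl => /eqP.
rewrite mulf_eq0 gt_eqF //= => /eqP /(dot_eq0_perp ri_unimodular).
move: (dot s y) => c ->; exists c.
by apply/colP => k; rewrite mulmx_trE mxE mulmx_trE dotZr.
Qed.

Lemma circuit_primitive : primitive A (pos_part x) (neg_part x).
Proof.
split; rewrite ?nvec_pos_part //.
- by apply: contra_neq circuit_neq0 => eq_pn; rewrite -(pos_sub_neg x) eq_pn subrr.
- by apply/eqP; rewrite -subr_eq0 -mulmxBr pos_sub_neg gale_ker.
move=> u v u_ge0 v_ge0 uv_neq Auv u_le v_le.
have [c uvE] : exists c, u - v = c *: x.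
  apply: circuit_ker_multiple; first by rewrite mulmxBr Auv subrr.
  move/forallP: u_le => /(_ i); move/forallP: v_le => /(_ i).
  move/forallP: u_ge0 => /(_ i); move/forallP: v_ge0 => /(_ i).
  rewrite neg_partE pos_partE circuitE crossxx mulr0.
  by rewrite !mxE; move: (u i 0) (v i 0) => a b; lia.
case: (conformal_multiple circuit_neq0 u_ge0 v_ge0 u_le v_le uvE) => // uv.
by rewrite uv eqxx in uv_neq.
Qed.

Lemma circuit_not_indispensable t :
  cross (r i) t = 1 -> (forall k, cross t (r k) <= Num.max (cross (r i) (r k)) 0) ->
  ~ indispensable A (pos_part x) (neg_part x).
Proof.
move=> ri_t t_le [_ _ _ fiber _].
pose w := pos_part x - B *m (perp t)^T.
have w_ge0 : nvec w.
  apply/forallP => k; rewrite mxE pos_partE circuitE mxE mulmx_trE rowBE dotZl dotC dot_perpl.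
  by have := t_le k; have := g_gt0 k; move: (g k) (cross t (r k)) (cross (r i) (r k)) => a b c; nia.
have Aw : A *m w = A *m pos_part x by rewrite mulmxBr gale_ker subr0.
have [t0 | perp_ri_t] : t = 0 \/ perp (r i) = perp t.
  case: (fiber w w_ge0 Aw) => [w_pos | w_neg]; [left | right].
    apply/eqP; rewrite -perp_eq0; apply/eqP/gale_mul_inj/oppr_inj/(addrI (pos_part x)).
    by rewrite oppr0 addr0.
  apply/eqP; rewrite -subr_eq0; apply/eqP/gale_mul_inj.
  rewrite linearB mulmxBr -/x -(pos_sub_neg x) -w_neg /w.
  by rewrite opprB [pos_part x + _]addrC subrK subrr.
- by move: ri_t; rewrite t0 /cross !mxE !mulr0 subrr.
- by move: ri_t; rewrite -dot_perpl perp_ri_t dot_perpl crossxx.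
Qed.

End Circuit.

Lemma strongly_robust_balanced :
  strongly_robust A -> (forall k, exists s, cross (r k) s = 1) -> balanced r.
Proof.
move=> A_robust r_unimodular l i.
case: (boolP [exists j, - dot l (r i) <= dot l (r j)]) => [/existsP // |].
rewrite negb_exists => /forallP sep.
have {}sep j : dot l (r j) < - dot l (r i) by rewrite ltNge sep.
have [s ri_s] := r_unimodular i.
have [t [ri_t t_le]] := separation_shift sep ri_s.
exfalso; apply: (circuit_not_indispensable ri_s ri_t t_le).
by apply/A_robust; apply: (circuit_primitive ri_s).
Qed.

End GaleRankTwo.

(** * Parallel classes and bouquets *)

Lemma ratmx_eq0 m n (M : 'M[int]_(m, n)) : (ratmx M == 0) = (M == 0).
Proof.
apply/eqP/eqP => [/matrixP M0 | ->]; last by rewrite /ratmx map_mx0.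
by apply/matrixP => i j; have /eqP := M0 i j; rewrite !mxE intr_eq0 => /eqP.
Qed.

Lemma ratmxZ m n (c : int) (M : 'M[int]_(m, n)) : ratmx (c *: M) = c%:~R *: ratmx M.
Proof. by apply/matrixP => i j; rewrite !mxE intrM. Qed.

Lemma row_ratmx m n (M : 'M[int]_(m, n)) k : row k (ratmx M) = ratmx (row k M).
Proof. by rewrite /ratmx map_row. Qed.

Lemma cross_eq0_ratmx z y :
  z != 0 -> cross z y = 0 -> exists c : rat, ratmx y = c *: ratmx z.
Proof.
rewrite -dot_self_eq0 -(intr_eq0 rat) => zz_neq0 /cross_eq0_dot /(congr1 (@ratmx 1 2)).
rewrite !ratmxZ => /(congr1 ( *:%R (dot z z)%:~R^-1)); rewrite !scalerA mulVf // scale1r.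
by exists ((dot z z)%:~R^-1 * (dot z y)%:~R).
Qed.

Lemma ratmx_scale_cross z y (c : rat) : ratmx y = c *: ratmx z -> cross z y = 0.
Proof.
move=> /matrixP yz; apply/eqP; rewrite -(intr_eq0 rat) /cross intrB !intrM.
have := yz 0 0; have := yz 0 1; rewrite !mxE => -> ->.
by apply/eqP; ring.
Qed.

Section Bouquets.

Variables (n : nat) (B : 'M[int]_(n, 2)).

Definition parallel_class (z : 'rV[int]_2) : {set 'I_n} :=
  [set k | cross z (row k B) == 0].

Let rows_in (S : {set 'I_n}) : 'M[rat]_(n, 2) :=
  \matrix_(i, j) (if i \in S then ratmx B i j else 0).

Lemma row_rows_in S k : row k (rows_in S) = if k \in S then ratmx (row k B) else 0.
Proof. by apply/rowP => j; rewrite !mxE; case: (k \in S); rewrite ?mxE. Qed.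

Lemma span_dim_gt0 (S : {set 'I_n}) i : i \in S -> row i B != 0 -> (0 < span_dim B S)%N.
Proof.
move=> iS Bi_neq0; rewrite lt0n mxrank_eq0 -/(rows_in S).
apply: contraNneq Bi_neq0 => S0.
by have := row_rows_in S i; rewrite iS S0 row0 => /esym/eqP; rewrite ratmx_eq0.
Qed.

Lemma span_dim_parallel_class_le1 z : z != 0 -> (span_dim B (parallel_class z) <= 1)%N.
Proof.
move=> z_neq0; rewrite -/(rows_in _).
apply: leq_trans (mxrankS (_ : rows_in _ <= ratmx z)%MS) (rank_leq_row _).
apply/row_subP => k; rewrite row_rows_in inE.
case: eqP => [zk | _]; last exact: sub0mx.
by have [c ->] := cross_eq0_ratmx z_neq0 zk; apply/sub_rVP; exists c.
Qed.

Lemma span_dim1_cross (T : {set 'I_n}) i k :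
  span_dim B T = 1%N -> i \in T -> k \in T -> row i B != 0 -> cross (row i B) (row k B) = 0.
Proof.
move=> rank1 iT kT Bi_neq0; have {}rank1 : \rank (rows_in T) = 1%N := rank1.
have Ti_neq0 : row i (rows_in T) != 0 by rewrite row_rows_in iT ratmx_eq0.
have := mxrank_leqif_eq (row_sub i (rows_in T)); rewrite rank_rV Ti_neq0 rank1.
case=> _ /esym /andP [_ T_le_i].
have /sub_rVP [c] := submx_trans (row_sub k _) T_le_i.
by rewrite !row_rows_in iT kT => /ratmx_scale_cross.
Qed.

Lemma bouquet_parallel_class z i (g : int) :
  z != 0 -> g != 0 -> row i B = g *: z -> bouquet B (parallel_class z).
Proof.
move=> z_neq0 g_neq0 BiE.
have Bi_neq0 : row i B != 0 by rewrite BiE scalemx_eq0 negb_or g_neq0.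
have i_in : i \in parallel_class z by rewrite inE BiE crossZr crossxx mulr0.
split.
  apply/eqP; rewrite eqn_leq span_dim_parallel_class_le1 //.
  exact: span_dim_gt0 i_in Bi_neq0.
move=> T /properP [sub_T [k kT]]; rewrite inE => /negP k_notin rank1; apply: k_notin.
have := span_dim1_cross rank1 (subsetP sub_T _ i_in) kT Bi_neq0.
by rewrite BiE crossZl => /eqP; rewrite mulf_eq0 (negbTE g_neq0).
Qed.

Lemma mixed_parallel_class z i j (gi gj : int) :
  0 < gi -> 0 < gj -> row i B = gi *: z -> row j B = - gj *: z ->
  mixed B (parallel_class z).
Proof.
move=> gi_gt0 gj_gt0 BiE BjE.
exists i, j; split; rewrite ?inE ?BiE ?BjE ?crossZr ?crossxx ?mulr0 //.
exists (- (gi%:~R / gj%:~R)); split; first by rewrite oppr_lt0 divr_gt0 ?ltr0z.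
rewrite !row_ratmx BiE BjE !ratmxZ scalerA; congr (_ *: _).
by rewrite intrN; field; rewrite intr_eq0 gt_eqF.
Qed.

Lemma antipodal_bouquet_mixed z i j (gi gj : int) :
  z != 0 -> 0 < gi -> 0 < gj -> row i B = gi *: z -> row j B = gj *: - z ->
  bouquet B (parallel_class z) /\ mixed B (parallel_class z).
Proof.
move=> z_neq0 gi_gt0 gj_gt0 BiE BjE.
split; first exact: bouquet_parallel_class z_neq0 (lt0r_neq0 gi_gt0) BiE.
have BjE' : row j B = - gj *: z by rewrite BjE scalerN scaleNr.
exact: mixed_parallel_class gi_gt0 gj_gt0 BiE BjE'.
Qed.

End Bouquets.

Theorem corollary1p2 (d : nat) (A : 'M[int]_(d, d.+2)) (B : 'M[int]_(d.+2, 2)) :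
  \rank (ratmx A) = d ->
  (forall x : 'cV[int]_(d.+2), A *m x = 0 -> nvec x -> x = 0) ->
  gale_transform A B ->
  (forall i : 'I_(d.+2), row i B != 0) ->
  strongly_robust A ->
  exists S1 S2 : {set 'I_(d.+2)},
    [/\ S1 != S2, bouquet B S1, mixed B S1, bouquet B S2 & mixed B S2].
Proof.
move=> _ _ B_gale B_rows_neq0 A_robust.
pose g k := content (row k B); pose r k := direction (row k B).
have g_gt0 k : 0 < g k by apply: content_gt0.
have rowBE k : row k B = g k *: r k by rewrite contentK.
have r_unimodular k : exists s, cross (r k) s = 1 :=
  direction_unimodular (B_rows_neq0 k).
have r_neq0 k : r k != 0.
  have [s] := r_unimodular k; apply: contra_eq_neq => ->.
  by rewrite /cross !mxE !mul0r subrr.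
have r_span y : y != 0 -> exists k, dot y (r k) != 0.
  move=> /(gale_rows_span B_gale) [k]; rewrite rowBE dotZr mulf_eq0 negb_or.
  by case/andP; exists k.
have r_balanced := strongly_robust_balanced B_gale g_gt0 rowBE A_robust r_unimodular.
have [i1 [i2 [j1 [j2 [i12_neq0 j1E j2E]]]]] :=
  balanced_two_antipodal_pairs r_balanced r_neq0 r_span.
have mixed_bouquet i j : r j = - r i ->
    bouquet B (parallel_class B (r i)) /\ mixed B (parallel_class B (r i)).
  move=> jE; have BjE : row j B = g j *: - r i by rewrite rowBE jE.
  exact: antipodal_bouquet_mixed (r_neq0 i) (g_gt0 i) (g_gt0 j) (rowBE i) BjE.
have [bouquet1 mixed1] := mixed_bouquet _ _ j1E.
have [bouquet2 mixed2] := mixed_bouquet _ _ j2E.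
exists (parallel_class B (r i1)), (parallel_class B (r i2)); split=> //.
apply: contraNneq i12_neq0 => class_eq.
have : i2 \in parallel_class B (r i2) by rewrite inE rowBE crossZr crossxx mulr0.
by rewrite -class_eq inE rowBE crossZr mulf_eq0 gt_eqF.
Qed.
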